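(* Let $h_1,h_2:(0,\infty)\to\mathbb{R}$ be convex, bounded and decreasing, with $\lim_{x\to0}h_1(x)=\lim_{x\to0}h_2(x)$. Then every connected component $I\ne(0,\infty)$ of $X(h_1,h_2)$ satisfies $I\cap\operatorname{supp}(h_1)\ne\varnothing$, and every connected component $I\ne(0,\infty)$ of $X(h_2,h_1)$ satisfies $I\cap\operatorname{supp}(h_2)\ne\varnothing$.
   Context: $X(h_1,h_2):=\{x>0:h_1(x)<h_2(x)\}$ (an open subset of $(0,\infty)$). $\operatorname{supp}(h):=\{x>0:\text{for every open }U\ni x,\ h|_U\text{ is not affine}\}$. *)

From HB Require Import structures.
From mathcomp Require Import all_boot all_order all_algebra.
From mathcomp Require Import all_classical all_reals all_analysis.
Set Implicit Arguments. Unset Strict Implicit. Unset Printing Implicit Defensive.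
Import Order.TTheory GRing.Theory Num.Theory.
Import numFieldNormedType.Exports.
Local Open Scope classical_set_scope.
Local Open Scope ring_scope.

Section Defs.
Variable R : realType.

Definition posR : set R := [set x | 0 < x].

Definition convex_pos (h : R -> R) : Prop :=
  forall x y t : R, 0 < x -> 0 < y -> 0 <= t <= 1 ->
    h (t * x + (1 - t) * y) <= t * h x + (1 - t) * h y.

Definition bounded_pos (h : R -> R) : Prop :=
  exists M : R, forall x, 0 < x -> `|h x| <= M.

Definition decreasing_pos (h : R -> R) : Prop :=
  forall x y, 0 < x -> x <= y -> h y <= h x.

Definition Xset (h1 h2 : R -> R) : set R := [set x | 0 < x /\ h1 x < h2 x].

Definition affine_on (h : R -> R) (U : set R) : Prop :=
  exists a b : R, forall y, U y -> 0 < y -> h y = a * y + b.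

Definition supp (h : R -> R) : set R :=
  [set x | 0 < x /\ forall U : set R, open U -> U x -> ~ affine_on h U].

Definition is_component (A I : set R) : Prop :=
  exists x, A x /\ I = connected_component A x.

End Defs.

From HB Require Import structures.
From mathcomp Require Import all_boot all_order all_algebra.
From mathcomp Require Import all_classical all_reals all_analysis.
From mathcomp Require Import ring lra.
Import Order.TTheory GRing.Theory Num.Theory.
Import numFieldNormedType.Exports.
Local Open Scope classical_set_scope.
Local Open Scope ring_scope.
Set Implicit Arguments. Unset Strict Implicit. Unset Printing Implicit Defensive.

(* Suppose a component I of X(h1,h2) misses supp h1. Then h1 is locally
   affine on I, hence equal on the connected set I to one affine function L,
   and I is open: h1 is continuous there, and the convex decreasing h2 is
   lower semicontinuous. An endpoint e > 0 of I lies outside X, and h1 cannot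
   jump above L at the end of an affine stretch, so h2 e <= h1 e <= L e.
   If I is bounded, h2 - L is convex, nonpositive at sup I, positive at any
   x0 in I, and not larger than at x0 at inf I (or, when inf I = 0, close to
   0, because h1 and h2 have the same limit there): a contradiction.
   If I is unbounded, the bounded function h1 forces L to be constant, and
   then h2 x0 <= h2 (inf I) <= L = h1 x0 unless inf I = 0, i.e. I = (0,oo). *)

Section convex_pos.
Variables (R : realType) (h : R -> R).
Hypothesis convex_h : convex_pos h.

Lemma convex_pos_chord (u v w : R) : 0 < u -> u < v -> v < w ->
  (w - u) * h v <= (w - v) * h u + (v - u) * h w.
Proof.
move=> u0 uv vw; pose t := (w - v) / (w - u).
have t01 : 0 <= t <= 1 by rewrite /t divr_ge0 ?ler_pdivrMr /=; lra.
have := convex_h (t := t) u0 (lt_trans u0 (lt_trans uv vw)) t01.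
have -> : t * u + (1 - t) * w = v by rewrite /t; field; lra.
have -> : t * h u + (1 - t) * h w = ((w - v) * h u + (v - u) * h w) / (w - u).
  by rewrite /t; field; lra.
by rewrite ler_pdivlMr 1?mulrC //; lra.
Qed.

Lemma convex_pos_le_line (a b u v w : R) : 0 < u -> u < v -> v < w ->
  h u - (a * u + b) <= h v - (a * v + b) -> h w <= a * w + b ->
  h v <= a * v + b.
Proof.
move=> u0 uv vw huv hw; have := convex_pos_chord u0 uv vw; nra.
Qed.

Lemma convex_pos_le_line_left (a b u v : R) : 0 < u -> u < v ->
  (forall y, u < y < v -> h y = a * y + b) -> h u <= a * u + b.
Proof.
move=> u0 uv hL; rewrite leNgt; apply/negP => hu.
set d := h u - (a * u + b).
set K := `|h (u / 2) - (a * (u / 2) + b)|.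
have d0 : 0 < d by rewrite /d; lra.
have K0 : 0 <= K := normr_ge0 _.
pose s := Num.min ((v - u) / 2) (u * d / (2 * (K + 1))).
have s0 : 0 < s by rewrite lt_min !divr_gt0 ?mulr_gt0 //; lra.
have sv : s <= (v - u) / 2 by rewrite ge_min lexx.
have sK : s * (2 * (K + 1)) <= u * d.
  rewrite -ler_pdivlMr; last lra.
  by rewrite ge_min lexx orbT.
have [y0 yv] : u < u + s /\ u + s < v by lra.
have chord : (u + s - u / 2) * h u <=
    (u + s - u) * h (u / 2) + (u - u / 2) * h (u + s).
  by apply: convex_pos_chord; lra.
rewrite (hL (u + s)) ?y0 ?yv // -[h u](subrK (a * u + b)) -/d in chord.
have := ler_norm (h (u / 2) - (a * (u / 2) + b)); rewrite -/K; nra.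
Qed.

Lemma convex_decreasing_pos_near_gt (y e : R) : decreasing_pos h ->
  0 < y -> 0 < e -> \forall z \near y, h y - e < h z.
Proof.
move=> decr_h y0 e0; set D := h (y / 2) - h y.
have D0 : 0 <= D by rewrite subr_ge0; apply: decr_h; lra.
pose del := Num.min (y / 2) (e * y / (2 * (D + 1))).
have del0 : 0 < del by rewrite lt_min !divr_gt0 ?mulr_gt0 //; lra.
have delD : del * (2 * (D + 1)) <= e * y.
  by rewrite -ler_pdivlMr ?ge_min ?lexx ?orbT //; lra.
apply/nbhs_ballP; exists del => // z; rewrite /ball /= ltr_norml => /andP[yz zy].
have dely : del <= y / 2 by rewrite ge_min lexx.
have z0 : 0 < z by lra.
have [zley|ylez] := leP z y; first by have := decr_h z y z0 zley; lra.
have chord : (z - y / 2) * h y <= (z - y) * h (y / 2) + (y - y / 2) * h z.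
  by apply: convex_pos_chord; lra.
rewrite [h (y / 2)](_ : _ = h y + D) in chord; last by rewrite /D; ring.
have : (z - y) * (D + 1) < del * (D + 1) by rewrite ltr_pM2r; lra.
rewrite -(ltr_pM2l y0); nra.
Qed.

End convex_pos.

Section affine.
Variable R : realType.
Implicit Types (h : R -> R) (a b c d : R).

Lemma decreasing_pos_le_line_right h a b (u v : R) : decreasing_pos h ->
  0 < u -> u < v -> (forall y, u < y < v -> h y = a * y + b) ->
  h v <= a * v + b.
Proof.
move=> decr_h u0 uv hL; rewrite leNgt; apply/negP => hv.
pose s := Num.min ((v - u) / 2) ((h v - (a * v + b)) / (`|a| + 1)).
have s0 : 0 < s by rewrite lt_min !divr_gt0 //; have := normr_ge0 a; lra.
have sv : s <= (v - u) / 2 by rewrite ge_min lexx.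
have sa : s * (`|a| + 1) <= h v - (a * v + b).
  by rewrite -ler_pdivlMr ?ge_min ?lexx ?orbT //; have := normr_ge0 a; lra.
have hy : h v <= a * (v - s) + b.
  by rewrite -hL ?decr_h //; lra.
have : - (a * s) <= `|a| * s.
  by rewrite -mulNr ler_wpM2r ?ler_normr ?lexx ?orbT //; lra.
nra.
Qed.

Lemma affine_on_open_unique h (U V : set R) (y : R) a b c d :
  open U -> open V -> U y -> V y -> 0 < y ->
  (forall z, U z -> 0 < z -> h z = a * z + b) ->
  (forall z, V z -> 0 < z -> h z = c * z + d) -> a = c /\ b = d.
Proof.
move=> oU oV Uy Vy y0 hU hV.
have /nbhs_ballP[e /= e0 UVe] := open_nbhs_nbhs (conj (openI oU oV) (conj Uy Vy)).
have [Uz Vz] : (U `&` V) (y + e / 2).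
  apply: UVe; rewrite /ball /= (_ : y - _ = - (e / 2)); last by ring.
  by rewrite normrN gtr0_norm; lra.
have hy := hU y Uy y0; rewrite (hV y Vy y0) in hy.
have hz : h (y + e / 2) = a * (y + e / 2) + b by apply: hU => //; lra.
rewrite (hV _ Vz) in hz; last lra.
have ac : a = c.
  by apply: (mulIf (_ : e / 2 != 0)); [rewrite lt0r_neq0 //; lra | lra].
by split => //; rewrite ac in hy; lra.
Qed.

Lemma affine_on_cvg h (U : set R) (y : R) c d : open U -> U y -> 0 < y ->
  (forall z, U z -> 0 < z -> h z = c * z + d) -> h z @[z --> y] --> h y.
Proof.
move=> oU Uy y0 hU.
have hUy : {near y, (fun z => c * z + d) =1 h}.
  near=> z; apply/esym/hU; near: z; first exact: open_nbhs_nbhs.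
  exact: lt_nbhsr.
apply: cvg_trans (near_eq_cvg hUy) _; rewrite (hU y Uy y0).
by apply: cvgD; [apply: cvgM; [exact: cvg_cst | exact: cvg_id] | exact: cvg_cst].
Unshelve. all: by end_near.
Qed.

Lemma affine_bounded_slope0 a b (c M : R) : 0 <= c ->
  (forall y, c < y -> `|a * y + b| <= M) -> a = 0.
Proof.
move=> c0 bdd; apply/eqP; apply: contraT => a0.
have M0 : 0 <= M by apply: le_trans (normr_ge0 _) (bdd (c + 1) _); lra.
have a0' : 0 < `|a| by rewrite normr_gt0.
pose y := c + (M + `|b| + 1) / `|a|.
have yc : c < y by rewrite /y ltrDl divr_gt0 //; have := normr_ge0 b; lra.
have ay : `|a * y| = `|a| * c + (M + `|b| + 1).
  rewrite normrM (@gtr0_norm _ y); last lra.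
  by rewrite /y mulrDr [X in _ + X]mulrCA mulfV ?gt_eqF // mulr1.
have := lerB_normD (a * y) b; have := bdd y yc.
have := mulr_ge0 (ltW a0') c0; lra.
Qed.

Lemma connected_locally_affine h (I : set R) (x0 : R) :
  connected I -> I x0 -> (forall y, I y -> 0 < y) ->
  (forall y, I y -> exists U, open U /\ U y /\ affine_on h U) ->
  exists a b, forall y, I y -> h y = a * y + b.
Proof.
move=> cI Ix0 Ipos loc.
pose line_set (p : R * R) := \bigcup_(U in [set U : set R | open U /\
  forall z : R, U z -> 0 < z -> h z = p.1 * z + p.2]) U.
have line_set_open p : open (line_set p) by apply: bigcup_open => U [].
have line_setP p y : line_set p y <->
    exists U, open U /\ U y /\ forall z, U z -> 0 < z -> h z = p.1 * z + p.2.
  by split => [[U [oU hU] Uy]|[U [oU [Uy hU]]]]; exists U.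
have line_set_uniq p q y : I y -> line_set p y -> line_set q y -> p = q.
  move=> Iy /line_setP[U [oU [Uy hU]]] /line_setP[V [oV [Vy hV]]].
  have [pq1 pq2] := affine_on_open_unique oU oV Uy Vy (Ipos y Iy) hU hV.
  by case: p q pq1 pq2 {hU hV} => ? ? [? ?] /= -> ->.
have [U0 [oU0 [U0x0 [a [b hU0]]]]] := loc x0 Ix0.
suff IE : I `&` line_set (a, b) = I.
  exists a, b => y; rewrite -IE => -[Iy /line_setP[U [_ [Uy hU]]]].
  exact: hU (Ipos y Iy).
apply: cI; first by exists x0; split => //; exists U0.
  by exists (line_set (a, b)).
exists (~` \bigcup_(q in [set q | q <> (a, b)]) line_set q).
  by apply: open_closedC; apply: bigcup_open.
apply/seteqP; split => y [Iy Ly]; split => //.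
  by move=> [q qab Lq]; apply: qab; exact: line_set_uniq Lq Ly.
have [U [oU [Uy [c [d hU]]]]] := loc y Iy.
have Ly' : line_set (c, d) y by apply/line_setP; exists U.
have [cd|cd] := pselect ((c, d) = (a, b)); first by rewrite -cd.
by exfalso; apply: Ly; exists (c, d).
Qed.

End affine.

Lemma Xset_near (R : realType) (h1 h2 : R -> R) (U : set R) (y c d : R) :
  convex_pos h2 -> decreasing_pos h2 -> open U -> U y ->
  (forall z, U z -> 0 < z -> h1 z = c * z + d) -> Xset h1 h2 y ->
  \forall z \near y, Xset h1 h2 z.
Proof.
move=> convex_h2 decr_h2 oU Uy hU [y0 h12y].
have g0 : 0 < (h2 y - h1 y) / 2 by rewrite divr_gt0 //; lra.
have h1_near : \forall z \near y, h1 z < h1 y + (h2 y - h1 y) / 2.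
  by apply: cvgr_lt (affine_on_cvg oU Uy y0 hU) _ _; lra.
have h2_near := convex_decreasing_pos_near_gt convex_h2 decr_h2 y0 g0.
near=> z; split; first by near: z; exact: lt_nbhsr.
suff : h1 z < h1 y + (h2 y - h1 y) / 2 /\ h2 y - (h2 y - h1 y) / 2 < h2 z by lra.
by split; near: z.
Unshelve. all: by end_near.
Qed.

Section real_sets.
Variables (R : realType) (A : set R).

Lemma connected_component_nbhs (x y : R) : connected_component A x y ->
  (\forall z \near y, A z) -> \forall z \near y, connected_component A x z.
Proof.
move=> Axy /nbhs_ballP[e /= e0 yeA]; apply/nbhs_ballP; exists e => // z yez.
apply: connected_component_trans Axy _.
apply: (@connected_component_max _ _ (ball y e)) => //; first exact: ballxx.
by rewrite ball_itv; apply/connected_intervalP; exact: interval_is_interval.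
Qed.

Lemma connected_component_itvcc (x y : R) : x <= y ->
  (forall z, x <= z <= y -> A z) -> connected_component A x y.
Proof.
move=> xy xyA; apply: (@connected_component_max _ _ `[x, y]) => /=.
- by rewrite in_itv /= lexx.
- by move=> z; rewrite /= in_itv /=; exact: xyA.
- by apply/connected_intervalP; exact: interval_is_interval.
- by rewrite in_itv /= lexx xy.
Qed.

Lemma open_inf_notin (S : set R) : open S -> has_lbound S -> ~ S (inf S).
Proof.
move=> oS lbS Sinf; have /nbhs_ballP[e /= e0 eS] := oS _ Sinf.
have : S (inf S - e / 2).
  by apply: eS; rewrite /ball /= opprB addrC subrK gtr0_norm; lra.
by move=> /(ge_inf lbS); lra.
Qed.

Lemma open_sup_notin (S : set R) : open S -> has_ubound S -> ~ S (sup S).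
Proof.
move=> oS ubS Ssup; have /nbhs_ballP[e /= e0 eS] := oS _ Ssup.
have : S (sup S + e / 2).
  by apply: eS; rewrite /ball /= opprD addNKr normrN gtr0_norm; lra.
by move=> /(ub_le_sup ubS); lra.
Qed.

Lemma interval_inf_lt (S : set R) (x y : R) : is_interval S -> has_lbound S ->
  S x -> inf S < y -> y <= x -> S y.
Proof.
move=> iS lbS Sx infy yx.
have [z Sz zy] : exists2 z, S z & z < inf S + (y - inf S).
  by apply: inf_adherent; [lra | split => //; exists x].
by apply: (iS z x) => //; apply/andP; split; lra.
Qed.

Lemma interval_lt_sup (S : set R) (x y : R) : is_interval S -> has_ubound S ->
  S x -> x <= y -> y < sup S -> S y.
Proof.
move=> iS ubS Sx xy ysup.
have [z Sz zy] : exists2 z, S z & sup S - (sup S - y) < z.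
  by apply: sup_adherent; [lra | split => //; exists x].
by apply: (iS x z) => //; apply/andP; split; lra.
Qed.

End real_sets.

Lemma cvg_at_right0_sub_lt (R : realType) (f g : R -> R) (l e x : R) :
  f t @[t --> 0^'+] --> l -> g t @[t --> 0^'+] --> l -> 0 < e -> 0 < x ->
  exists t, [/\ 0 < t, t < x & g t - f t < e].
Proof.
move=> fl gl e0 x0.
have gf0 : g t - f t @[t --> 0^'+] --> 0.
  by rewrite -[X in _ --> X](subrr l); exact: cvgB.
apply: (@filter_ex _ _ (at_right_proper_filter 0)).
near=> t; split; near: t;
  [exact: nbhs_right_gt | exact: nbhs_right_lt | exact: cvgr_lt _ gf0 _ e0].
Unshelve. all: by end_near.
Qed.

Section component_of_Xset.
Variables (R : realType) (h1 h2 : R -> R) (x0 : R).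
Hypotheses (convex_h1 : convex_pos h1) (convex_h2 : convex_pos h2).
Hypotheses (decr_h1 : decreasing_pos h1) (decr_h2 : decreasing_pos h2).
Hypothesis Xx0 : Xset h1 h2 x0.
Local Notation I := (connected_component (Xset h1 h2) x0).
Hypothesis I_nosupp : forall x, I x -> ~ supp h1 x.

Let I_X : I `<=` Xset h1 h2 := @connected_component_sub _ _ _.
Let I_pos y : I y -> 0 < y. Proof. by move=> /I_X[]. Qed.
Let Ix0 : I x0 := connected_component_refl Xx0.
Let I_lbound : has_lbound I. Proof. by exists 0 => y /I_pos/ltW. Qed.
Let I_interval : is_interval I.
Proof. by apply/connected_intervalP; exact: component_connected. Qed.

Lemma component_locally_affine y :
  I y -> exists U, open U /\ U y /\ affine_on h1 U.
Proof.
move=> Iy; apply: contrapT => nloc; apply: (I_nosupp Iy); split; first exact: I_pos.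
by move=> U oU Uy affU; apply: nloc; exists U.
Qed.

Lemma open_component : open I.
Proof.
rewrite openE /= => y Iy.
have [U [oU [Uy [c [d hU]]]]] := component_locally_affine Iy.
exact: connected_component_nbhs Iy (Xset_near convex_h2 decr_h2 oU Uy hU (I_X Iy)).
Qed.

Lemma component_affine : exists a b, forall y, I y -> h1 y = a * y + b.
Proof.
apply: connected_locally_affine Ix0 I_pos component_locally_affine.
exact: component_connected.
Qed.

Variables (a b : R).
Hypothesis h1_line : forall y, I y -> h1 y = a * y + b.

Lemma component_inf_lt : inf I < x0.
Proof.
rewrite lt_neqAle (ge_inf I_lbound Ix0) andbT; apply/eqP => x0E.
by apply: (open_inf_notin open_component I_lbound); rewrite x0E.
Qed.

Lemma component_inf_le_line : 0 < inf I -> h2 (inf I) <= a * inf I + b.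
Proof.
move=> inf0; have infx0 := component_inf_lt.
have h1inf : h1 (inf I) <= a * inf I + b.
  apply: (convex_pos_le_line_left convex_h1 (v := x0)) => // y /andP[infy yx0].
  by apply/h1_line/(interval_inf_lt I_interval I_lbound Ix0 infy); exact: ltW.
suff : h2 (inf I) <= h1 (inf I) by lra.
rewrite leNgt; apply/negP => h12; apply: (open_inf_notin open_component I_lbound).
apply/connected_component_sym/(connected_component_itvcc (ltW infx0)).
move=> z /andP[]; rewrite le_eqVlt => /predU1P[<- _|infz zx0]; first by split.
by apply/I_X/(interval_inf_lt I_interval I_lbound Ix0 infz).
Qed.

Lemma component_unbounded (l : R) :
  h1 x @[x --> 0^'+] --> l -> h2 x @[x --> 0^'+] --> l -> ~ has_ubound I.
Proof.
move=> h1l h2l ubI; have supx0 : x0 < sup I.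
  rewrite lt_neqAle (ub_le_sup ubI Ix0) andbT; apply/eqP => x0E.
  by apply: (open_sup_notin open_component ubI); rewrite -x0E.
have I_below y : x0 <= y -> y < sup I -> I y.
  exact: interval_lt_sup I_interval ubI Ix0.
have h1sup : h1 (sup I) <= a * sup I + b.
  apply: (decreasing_pos_le_line_right decr_h1 (u := x0)) => //.
    exact: I_pos.
  by move=> y /andP[x0y ysup]; apply/h1_line/I_below => //; exact: ltW.
have h2sup : h2 (sup I) <= a * sup I + b.
  suff : h2 (sup I) <= h1 (sup I) by lra.
  rewrite leNgt; apply/negP => h12; apply: (open_sup_notin open_component ubI).
  apply: (connected_component_itvcc (ltW supx0)) => z /andP[x0z].
  rewrite le_eqVlt => /predU1P[-> |zsup]; last exact/I_X/I_below.
  by split => //; apply: lt_le_trans (I_pos Ix0) (ltW supx0).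
have [x00 h12x0] := Xx0.
have [u [u0 ux0 hu]] : exists u, [/\ 0 < u, u < x0 &
    h2 u - (a * u + b) <= h2 x0 - (a * x0 + b)].
  have [inf0|inf0] := eqVneq (inf I) 0.
    have g0 : 0 < h2 x0 - h1 x0 by lra.
    have [t [t0 tx0 h12t]] := cvg_at_right0_sub_lt h1l h2l g0 x00.
    exists t; split => //; rewrite -!h1_line //; first lra.
    by apply: interval_inf_lt I_interval I_lbound Ix0 _ (ltW tx0); rewrite inf0.
  have inf0' : 0 < inf I.
    rewrite lt_neqAle eq_sym inf0 /=.
    by apply: lb_le_inf => [|y /I_pos/ltW]; first by exists x0.
  exists (inf I); split => //; first exact: component_inf_lt.
  have := component_inf_le_line inf0'; rewrite -(h1_line Ix0); lra.
have := convex_pos_le_line convex_h2 u0 ux0 supx0 hu h2sup.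
by rewrite -(h1_line Ix0); lra.
Qed.

Lemma component_eq_posR : bounded_pos h1 -> ~ has_ubound I -> I = @posR R.
Proof.
move=> [M h1M] /has_ubPn nubI.
have I_above y : inf I < y -> I y.
  move=> infy; have [z Iz yz] := nubI (Num.max y x0).
  have [yx0|x0y] := leP y x0.
    exact: interval_inf_lt I_interval I_lbound Ix0 infy yx0.
  apply: (I_interval Ix0 Iz); rewrite (ltW x0y) /=.
  by apply: le_trans (ltW yz); rewrite le_max lexx.
have inf0 : 0 <= inf I by apply: lb_le_inf => [|y /I_pos/ltW]; first by exists x0.
have a0 : a = 0.
  apply: (affine_bounded_slope0 (b := b) inf0) => y infy.
  by rewrite -h1_line; [apply: h1M; apply: I_pos|]; exact: I_above.
have infE : inf I = 0.
  apply/eqP; rewrite eq_le inf0 andbT leNgt; apply/negP => inf0'.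
  have := component_inf_le_line inf0'; have [_] := Xx0.
  have := decr_h2 inf0' (ltW component_inf_lt); rewrite h1_line // a0; lra.
apply/seteqP; split => y; first exact: I_pos.
by rewrite /posR /= -infE; exact: I_above.
Qed.

End component_of_Xset.

Lemma component_Xset_meets_supp (R : realType) (h1 h2 : R -> R) :
  convex_pos h1 -> convex_pos h2 -> bounded_pos h1 ->
  decreasing_pos h1 -> decreasing_pos h2 ->
  (exists l : R, h1 x @[x --> 0^'+] --> l /\ h2 x @[x --> 0^'+] --> l) ->
  forall I : set R, is_component (Xset h1 h2) I -> I <> @posR R ->
    exists x, I x /\ supp h1 x.
Proof.
move=> convex_h1 convex_h2 bounded_h1 decr_h1 decr_h2 [l [h1l h2l]] I.
move=> [x0 [Xx0 ->]] IposR; apply: contrapT => nsupp.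
have I_nosupp x : connected_component (Xset h1 h2) x0 x -> ~ supp h1 x.
  by move=> Ix suppx; apply: nsupp; exists x.
have [a [b h1_line]] := component_affine Xx0 I_nosupp.
apply/IposR/(component_eq_posR convex_h1 convex_h2 decr_h2 Xx0 I_nosupp h1_line).
  exact: bounded_h1.
exact: (component_unbounded convex_h1 convex_h2 decr_h1 decr_h2 Xx0 I_nosupp
  h1_line h1l h2l).
Qed.

Theorem proposition6p5 (R : realType) (h1 h2 : R -> R) :
  convex_pos h1 -> convex_pos h2 ->
  bounded_pos h1 -> bounded_pos h2 ->
  decreasing_pos h1 -> decreasing_pos h2 ->
  (exists l : R, h1 x @[x --> 0^'+] --> l /\ h2 x @[x --> 0^'+] --> l) ->
  (forall I : set R, is_component (Xset h1 h2) I -> I <> @posR R ->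
     exists x, I x /\ supp h1 x) /\
  (forall I : set R, is_component (Xset h2 h1) I -> I <> @posR R ->
     exists x, I x /\ supp h2 x).
Proof.
move=> convex_h1 convex_h2 bounded_h1 bounded_h2 decr_h1 decr_h2 [l [h1l h2l]].
by split; apply: component_Xset_meets_supp => //; exists l.
Qed.
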